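(* Let $T_1^f$, $T_2^g$ be merge trees, $\delta>0$, and let $\hat T_1^f$, $\hat T_2^g$ be the augmented trees with respect to $\delta$. For any valid pair $(S,w)$, $F(S,w) = 1$ if and only if there is a partial-$\delta$-good map $\alpha: \mathcal{F}_1(S) \to T_2(w)$.
   Context: A merge tree $T^h$ is a finite rooted tree $T$ with a continuous function $h:|T|\to\mathbb{R}$ on its underlying space (interior points of edges included), decreasing along every root-to-leaf path, modified by attaching to the root a ray upward along which $h$ increases to $+\infty$. $u \succeq v$ means $u$ is an ancestor of $v$; $u^{\varepsilon}$ is the unique ancestor of $u$ with $h(u^\varepsilon) - h(u) = \varepsilon$. Tree nodes are vertices of $T$. The depth of a point $x$ is $\mathrm{depth}(x) = \max_{y \preceq x} (h(x) - h(y))$, the maximum over descendants $y$ of $x$. Let $T_1^f, T_2^g$ be merge trees and $\delta>0$. The level at height $c$ is the set of points of the tree with function value $c$. Let $C_1 = \{f(x): x \text{ a tree node of } T_1\}$, $C_2 = \{g(y): y \text{ a tree node of } T_2\}$. The superlevels of $T_1^f$ are the levels at heights in $C_1 \cup \{c-\delta: c\in C_2\}$, and those of $T_2^g$ are the levels at heights in $\{c+\delta : c \in C_1\} \cup C_2$. Sorting by height, they are $L^1_1,\dots,L^1_m$ with heights $h_1<\dots<h_m$ and $L^2_1,\dots,L^2_m$ with heights $\hat h_i = h_i + \delta$. The augmented tree $\hat T_1^f$ (resp. $\hat T_2^g$) is obtained from $T_1^f$ (resp. $T_2^g$) by adding all points of all its superlevels as (degree-2) nodes; $L^1_m$ and $L^2_m$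 each consist of the single node $\mathrm{root}(\hat T_1^f)$, $\mathrm{root}(\hat T_2^g)$. For a node $v$ on the $i$-th superlevel, $C(v)$ denotes its children in the augmented tree (all on the $(i-1)$-th superlevel); for a set $S$, $C(S)$ is the union of the children of its nodes. A pair $(S,w)$ with $w$ a node of $\hat T_2^g$ and $S$ a set of nodes of $\hat T_1^f$ is valid if for some $j$, $S \subseteq L^1_j$, $w \in L^2_j$, and all nodes of $S$ have the same ancestor at height $h_j + 2\delta$. The feasibility $F(S,w)\in\{0,1\}$ of valid pairs is defined by induction on the superlevel index $i$ of $(S,w)$: for $i=1$, $F(S,w)=1$ iff $\mathrm{depth}(w) \le 2\delta$. For $i>1$, let $C(w) = \{w_1,\dots,w_k\}$. If $C(w)=\emptyset$, $F(S,w)=1$ iff $C(S)=\emptyset$. Otherwise $F(S,w)=1$ iff there is a partition $C(S) = S_1 \cup \dots \cup S_k$ into pairwise disjoint, possibly empty sets such that for each $j \in [1,k]$: (F-1) if $S_j \ne \emptyset$ then $(S_j,w_j)$ is a valid pair with $F(S_j,w_j)=1$; (F-2) if $S_j = \emptyset$ then $\mathrm{depth}(w_j) \le 2\delta - (\hat h_i - \hat h_{i-1})$. $\mathcal{F}_1(S)$ is the forest consisting of all subtrees of $T_1^f$ rooted at nodes of $S$, and $T_2(w)$ is the subtree of $T_2^g$ rooted at $w$. For a valid pair $(S,w)$, a continuous map $\alpha: \mathcal{F}_1(S)\to T_2(w)$ is partial-$\delta$-good if: (P1) $g(\alpha(u)) = f(u)+\delta$ for all $u \in \mathcal{F}_1(S)$;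 (P2) for $u_1,u_2 \in \mathcal{F}_1(S)$ with $\alpha(u_1)\succeq\alpha(u_2)$, we have $u_1^{2\delta} \succeq u_2^{2\delta}$ in $T_1^f$; (P3) for every $z \in T_2(w)\setminus \mathrm{Im}(\alpha)$, $|g(z^F) - g(z)| \le 2\delta$, where $z^F$ is the lowest ancestor of $z$ in $\mathrm{Im}(\alpha)$. *)

From mathcomp Require Import all_boot all_order all_algebra.
From mathcomp Require Import reals.
Set Implicit Arguments. Unset Strict Implicit. Unset Printing Implicit Defensive.
Import Order.TTheory GRing.Theory Num.Theory.
Local Open Scope ring_scope.

(* A merge tree T^h is given by a finite rooted tree (finite node type,      *)
(* parent map, unique root) together with the heights of the nodes; the      *)
(* function h is strictly increasing from a node to its parent.  The         *)
(* underlying space |T| (edges + the ray above the root) is represented by   *)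
(* the points (v, t) with h(v) <= t < h(parent v)  (t >= h(root) for the     *)
(* root: the ray to +oo): the point of the edge above v at height t.  Every  *)
(* merge tree is, up to height-preserving homeomorphism, of this form, since *)
(* h restricted to an edge is a homeomorphism onto an interval.              *)
Record mtree (R : realType) := MTree {
  node : finType;
  par : node -> option node;
  hv : node -> R;
  par_lt : forall u v, par u = Some v -> hv u < hv v;
  root_unique : exists r, forall v, par v = None <-> v = r
}.

Section MergeTree.
Variable R : realType.

Definition is_pt (T : mtree R) (x : node T * R) : bool :=
  (hv x.1 <= x.2) && (if par x.1 is Some p then x.2 < hv p else true).

Definition pt (T : mtree R) := {x : node T * R | is_pt x}.

Definition pnode (T : mtree R) (x : pt T) : node T := (sval x).1.
Definition ph (T : mtree R) (x : pt T) : R := (sval x).2.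

Definition nanc (T : mtree R) (u v : node T) : Prop :=
  exists n, iter n (fun o => obind (@par _ T) o) (Some v) = Some u.

Definition panc (T : mtree R) (x y : pt T) : Prop :=
  nanc (pnode x) (pnode y) /\ ph y <= ph x.

Definition anc_at (T : mtree R) (y a : pt T) (eps : R) : Prop :=
  panc a y /\ ph a - ph y = eps.

Definition depth_le (T : mtree R) (x : pt T) (c : R) : Prop :=
  forall y, panc x y -> ph x - ph y <= c.

(* The path metric of |T| is d(x,y) = 2 h(lca(x,y)) - h(x) - h(y)
   = min over common ancestors a of (2 h(a) - h(x) - h(y));
   tclose x y eta  <->  d(x,y) < eta. *)
Definition tclose (T : mtree R) (x y : pt T) (eta : R) : Prop :=
  exists a, panc a x /\ panc a y /\ 2 * ph a - ph x - ph y < eta.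

Variables (T1 T2 : mtree R) (delta : R).

(* heights h_1 < ... < h_m of the superlevels of T1 (0-indexed here:
   level k in Rocq is the (k+1)-th superlevel of the paper); the superlevels
   of T2 are at heights h_k + delta. *)
Definition levels : seq R :=
  sort <=%R (undup (map (@hv _ T1) (enum (node T1)) ++
                    map (fun v => @hv _ T2 v - delta) (enum (node T2)))).

Definition lvl (k : nat) : R := nth 0 levels k.

Definition valid (k : nat) (S : pt T1 -> Prop) (w : pt T2) : Prop :=
  (k < size levels)%N /\
  (exists s, S s) /\
  (forall s, S s -> ph s = lvl k) /\
  ph w = lvl k + delta /\
  (forall s1 s2 a1 a2, S s1 -> S s2 ->
      panc a1 s1 -> ph a1 = lvl k + 2 * delta ->
      panc a2 s2 -> ph a2 = lvl k + 2 * delta -> a1 = a2).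

Definition valid_pair (S : pt T1 -> Prop) (w : pt T2) : Prop :=
  exists k, valid k S w.

(* Feasibility F(S,w), by induction on the (0-indexed) superlevel index.
   Children of a node of the augmented tree at superlevel k+1 are the points
   of superlevel k below it. *)
Fixpoint feasible (k : nat) (S : pt T1 -> Prop) (w : pt T2) : Prop :=
  match k with
  | 0 => depth_le w (2 * delta)
  | k'.+1 =>
    let CS := fun x : pt T1 => ph x = lvl k' /\ exists s, S s /\ panc s x in
    let Cw := fun z : pt T2 => ph z = lvl k' + delta /\ panc w z in
    ((forall z, ~ Cw z) /\ (forall x, ~ CS x)) \/
    ((exists z, Cw z) /\
     exists Sj : pt T2 -> pt T1 -> Prop,
       (* C(S) is the disjoint union of the S_j, indexed by the children w_j *)
       (forall x, CS x <-> exists z, Cw z /\ Sj z x) /\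
       (forall z z', Cw z -> Cw z' -> z <> z' -> forall x, Sj z x -> ~ Sj z' x) /\
       (forall z, Cw z ->
          ((exists x, Sj z x) -> valid_pair (Sj z) z /\ feasible k' (Sj z) z) /\
          ((forall x, ~ Sj z x) ->
             depth_le z (2 * delta - ((lvl k + delta) - (lvl k' + delta))))))
  end.

Definition forest1 (S : pt T1 -> Prop) (u : pt T1) : Prop :=
  exists s, S s /\ panc s u.

Definition partial_good (S : pt T1 -> Prop) (w : pt T2)
    (alpha : pt T1 -> pt T2) : Prop :=
  let F := forest1 S in
  let Im := fun z => exists u, F u /\ alpha u = z in
  (forall u, F u -> panc w (alpha u)) /\
  (forall u, F u -> forall e, 0 < e -> exists eta, 0 < eta /\
       forall u', F u' -> tclose u u' eta -> tclose (alpha u) (alpha u') e) /\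
  (forall u, F u -> ph (alpha u) = ph u + delta) /\
  (forall u1 u2, F u1 -> F u2 -> panc (alpha u1) (alpha u2) ->
     forall a1 a2, anc_at u1 a1 (2 * delta) -> anc_at u2 a2 (2 * delta) ->
       panc a1 a2) /\
  (forall z, panc w z -> ~ Im z ->
     exists zF, (panc zF z /\ Im zF /\ (forall z', panc z' z -> Im z' -> panc z' zF))
                /\ `|ph zF - ph z| <= 2 * delta).

End MergeTree.

From mathcomp Require Import all_boot all_order all_algebra.
From mathcomp Require Import reals classical_sets.
From mathcomp Require Import lra.
From Stdlib Require Import Classical ClassicalEpsilon.
Set Implicit Arguments. Unset Strict Implicit. Unset Printing Implicit Defensive.
Import Order.TTheory GRing.Theory Num.Theory.
Local Open Scope ring_scope.

(* A continuous map that shifts heights by delta is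
   locally monotone for ancestry, hence monotone (real induction along a segment).  So a
   partial-delta-good map alpha on F_1(S) sends the children C(S) to children of w, and its
   restrictions to the fibres {x in C(S) | alpha x = w_j} are partial-delta-good: this is the
   partition witnessing F(S, w) = 1, a child with an empty fibre having small depth by (P3).
   Conversely, given the partition and, by induction, maps alpha_j, glue them: below level
   i-1 use alpha_j on the branch through S_j, between the levels go straight up from w_j,
   and send level i to w.  No tree node lies strictly between two consecutive superlevels,
   so every point below level i lies on a unique branch; this makes the glued map
   continuous and partial-delta-good. *)

Section Tree.
Variables (R : realType) (T : mtree R).
Implicit Types (u v : node T) (x y z a b : pt T).

Lemma iter_obind_par_None n : iter n (fun o => obind (@par _ T) o) None = None.
Proof. by elim: n => //= n ->. Qed.

Lemma nanc_refl v : nanc v v.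
Proof. by exists 0%N. Qed.

Lemma nanc_par v p : par v = Some p -> nanc p v.
Proof. by exists 1%N. Qed.

Lemma nanc_trans u v p : nanc u v -> nanc v p -> nanc u p.
Proof. by case=> n hn [m hm]; exists (n + m)%N; rewrite iterD hm. Qed.

Lemma nanc_step u v : nanc u v -> u = v \/ exists2 p, par v = Some p & nanc u p.
Proof.
case=> -[|n]; first by case=> ->; left.
rewrite iterSr /=; case E: (par v) => [q|]; last by rewrite iter_obind_par_None.
by right; exists q; last exists n.
Qed.

Lemma nanc_hv_lt u v : nanc u v -> u = v \/ hv v < hv u.
Proof.
case=> n; elim: n u => [|n IH] u /=; first by case=> ->; left.
case E: (iter n _ _) => [u'|] //= /par_lt hlt; right.
by case: (IH u' E) => [<- //|]; move/lt_trans; apply.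
Qed.

Lemma nanc_hv_le u v : nanc u v -> hv v <= hv u.
Proof. by case/nanc_hv_lt => [->|/ltW]. Qed.

Lemma nanc_antisym u v : nanc u v -> nanc v u -> u = v.
Proof.
move=> h1 h2; case: (nanc_hv_lt h1) => // l1; case: (nanc_hv_lt h2) => // l2.
by have := lt_trans l1 l2; rewrite ltxx.
Qed.

Lemma nanc_total u v p : nanc u p -> nanc v p -> nanc u v \/ nanc v u.
Proof.
case=> n hn [m hm]; case: (leqP n m) => hnm.
  by right; exists (m - n)%N; rewrite -hn -iterD subnK.
by left; exists (n - m)%N; rewrite -hm -iterD subnK // ltnW.
Qed.

Lemma pt_ext x y : pnode x = pnode y -> ph x = ph y -> x = y.
Proof.
case: x y => [[v t] hx] [[v' t'] hy]; rewrite /pnode /ph /= => ev et.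
by move: hy; rewrite -ev -et => hy; congr exist; apply: bool_irrelevance.
Qed.

Lemma hv_pnode_le x : hv (pnode x) <= ph x.
Proof. by case: x => [[v t] h]; rewrite /pnode /ph /=; case/andP: h. Qed.

Lemma ph_lt_hv_par x p : par (pnode x) = Some p -> ph x < hv p.
Proof.
by case: x => [[v t] h]; rewrite /pnode /ph /= => E; case/andP: h; rewrite /= E.
Qed.

Lemma pt_on_edge v t : hv v <= t -> (forall p, par v = Some p -> t < hv p) ->
  exists x, pnode x = v /\ ph x = t.
Proof.
move=> h1 h2; have hpt : is_pt (T:=T) (v, t).
  by rewrite /is_pt /= h1; case E: (par v) => [p|] //; apply: h2.
by exists (exist _ (v, t) hpt).
Qed.

Lemma panc_refl x : panc x x.
Proof. by split; [apply: nanc_refl|]. Qed.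

Lemma panc_trans a b c : panc a b -> panc b c -> panc a c.
Proof. by case=> h1 l1 [h2 l2]; split; [apply: nanc_trans h1 h2 | apply: le_trans l2 l1]. Qed.

Lemma panc_ph_le a b : panc a b -> ph b <= ph a.
Proof. by case. Qed.

Lemma panc_antisym a b : panc a b -> panc b a -> a = b.
Proof.
case=> h1 l1 [h2 l2]; apply: pt_ext; first exact: nanc_antisym.
by apply/eqP; rewrite eq_le l1 l2.
Qed.

Lemma panc_edge a b : pnode a = pnode b -> ph b <= ph a -> panc a b.
Proof. by move=> e l; split => //; rewrite e; apply: nanc_refl. Qed.

Lemma exists_desc_ph y t : hv (pnode y) <= t -> t <= ph y -> exists x, panc y x /\ ph x = t.
Proof.
move=> l1 l2; have [|x [ex et]] := pt_on_edge l1.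
  by move=> p hp; apply: le_lt_trans l2 (ph_lt_hv_par hp).
by exists x; split=> //; apply: panc_edge; rewrite ?ex ?et.
Qed.

Lemma panc_pnode_eq a y : panc a y ->
  (forall p, par (pnode y) = Some p -> ph a < hv p) -> pnode a = pnode y.
Proof.
case=> /nanc_step[//|[p hp /nanc_hv_le hn]] _ /(_ p hp).
by rewrite ltNge (le_trans hn (hv_pnode_le a)).
Qed.

Lemma panc_same_pnode a b : panc a b -> hv (pnode a) <= ph b -> pnode a = pnode b.
Proof.
case=> /nanc_step[//|[p hp /nanc_hv_le hn]] _ hl.
by have := le_lt_trans (le_trans hn hl) (ph_lt_hv_par hp); rewrite ltxx.
Qed.

Lemma panc_ph_eq a b : panc a b -> ph a = ph b -> a = b.
Proof.
by move=> h e; apply: pt_ext => //; apply: panc_same_pnode; rewrite // -e hv_pnode_le.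
Qed.

Lemma panc_common a b y : panc a y -> panc b y -> ph b <= ph a -> panc a b.
Proof.
case=> ha la [hb lb] l; split => //.
case: (nanc_total ha hb) => // /nanc_step[->|[p hp /nanc_hv_le hn]]; first exact: nanc_refl.
have := le_lt_trans (le_trans hn (le_trans (hv_pnode_le b) l)) (ph_lt_hv_par hp).
by rewrite ltxx.
Qed.

Lemma panc_total a b y : panc a y -> panc b y -> panc a b \/ panc b a.
Proof.
move=> ha hb; case: (lerP (ph b) (ph a)) => l; first by left; apply: panc_common ha hb l.
by right; apply: panc_common hb ha (ltW l).
Qed.

Lemma panc_ph_inj a b y : panc a y -> panc b y -> ph a = ph b -> a = b.
Proof.
by move=> ha hb e; apply: panc_antisym; [apply: panc_common ha hb _ | apply: panc_common hb ha _];
  rewrite e.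
Qed.

Lemma exists_nanc_ph v t : hv v <= t -> exists a, nanc (pnode a) v /\ ph a = t.
Proof.
have [n] := ubnP #|[set u : node T | hv v < hv u]|; elim: n v => // n IH v hn ht.
have on_edge : (forall p, par v = Some p -> t < hv p) ->
    exists a, nanc (pnode a) v /\ ph a = t.
  by move=> hp; have [a [ea <-]] := pt_on_edge ht hp; exists a; rewrite ea; split => //;
    apply: nanc_refl.
case E: (par v) => [p|]; last by apply: on_edge => p; rewrite E.
case: (ltP t (hv p)) => htp; first by apply: on_edge => q; rewrite E => -[<-].
have [|a [ha <-]] := IH p _ htp; last by exists a; split => //; apply: nanc_trans ha (nanc_par E).
rewrite -ltnS (leq_trans _ hn) // ltnS proper_card //; apply/properP; split.
  by apply/fintype.subsetP => u; rewrite !inE; apply: lt_trans (par_lt E).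
by exists p; rewrite !inE ?ltxx ?par_lt.
Qed.

Lemma exists_panc_ph y t : ph y <= t -> exists a, panc a y /\ ph a = t.
Proof.
move=> l; have [a [ha ea]] := exists_nanc_ph (le_trans (hv_pnode_le y) l).
by exists a; split=> //; split; rewrite // ea.
Qed.

Definition pcomparable x y := panc x y \/ panc y x.

Lemma pcomparable_sym x y : pcomparable x y -> pcomparable y x.
Proof. by case; [right|left]. Qed.

Lemma panc_pcomparable a b z : panc a b -> pcomparable b z -> pcomparable a z.
Proof. by move=> hab [/(panc_trans hab)|/(panc_total hab)]; [left|]. Qed.

Lemma panc_pcomparable_ph a b c : panc a c -> pcomparable b c -> ph b <= ph a -> panc a b.
Proof. by move=> hac [hbc|/(panc_trans hac)//] l; apply: panc_common hac hbc l. Qed.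

(* the last hypothesis says that the edge of [y] reaches down to height [ph z1] *)
Lemma pcomparable_uniq y z1 z2 :
  pcomparable y z1 -> pcomparable y z2 -> ph z1 = ph z2 -> hv (pnode y) <= ph z1 -> z1 = z2.
Proof.
move=> h1 h2 e l.
have edge z : panc y z -> ph z = ph z1 -> pnode z = pnode y.
  by move=> h ez; rewrite (panc_same_pnode h) // ez.
have flat z z' : panc y z -> panc z' y -> ph z = ph z' -> z = z'.
  move=> h h' ez; have hy : ph y = ph z.
    by apply/eqP; rewrite eq_le (panc_ph_le h) andbT ez (panc_ph_le h').
  have -> : z = y by symmetry; apply: panc_ph_eq h hy.
  by symmetry; apply: panc_ph_eq h' _; rewrite -ez hy.
case: h1 h2 => [h1|h1] [h2|h2].
- by apply: pt_ext; rewrite ?edge.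
- exact: flat.
- by symmetry; apply: flat.
- exact: panc_ph_inj h1 h2 e.
Qed.

Lemma tclose_anc a b eta : panc a b -> ph a - ph b < eta -> tclose a b eta.
Proof.
move=> h l; exists a; split; first exact: panc_refl.
by split => //; lra.
Qed.

Lemma tclose_sym x y eta : tclose x y eta -> tclose y x eta.
Proof. by case=> a [h1 [h2 l]]; exists a; do !split => //; lra. Qed.

Lemma tclose_refl x eta : 0 < eta -> tclose x x eta.
Proof. by move=> he; apply: tclose_anc; rewrite ?subrr //; apply: panc_refl. Qed.

Lemma tclose_le x y e1 e2 : tclose x y e1 -> e1 <= e2 -> tclose x y e2.
Proof. by case=> a [h1 [h2 l]] le; exists a; do !split => //; apply: lt_le_trans le. Qed.

Lemma tcloseP x y eta : tclose x y eta ->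
  exists a, [/\ panc a x, panc a y, ph a - ph x < eta & ph a - ph y < eta].
Proof.
case=> a [h1 [h2 l]]; exists a; split => //.
  by have := panc_ph_le h2; lra.
by have := panc_ph_le h1; lra.
Qed.

Lemma pcomparable_tclose x y eta :
  pcomparable x y -> ph x - ph y < eta -> ph y - ph x < eta -> tclose x y eta.
Proof. by case=> h l1 l2; [|apply: tclose_sym]; apply: tclose_anc. Qed.

(* on the ray above the root any positive value would do *)
Definition edge_gap y : R := if par (pnode y) is Some p then hv p - ph y else 1.

Lemma edge_gap_gt0 y : 0 < edge_gap y.
Proof.
rewrite /edge_gap; case E: (par (pnode y)) => [p|] //.
by rewrite subr_gt0; apply: ph_lt_hv_par.
Qed.

Lemma tclose_edge_gap y y' : tclose y y' (edge_gap y) ->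
  (ph y <= ph y' -> panc y' y) /\ (ph y' <= ph y -> panc y y').
Proof.
case=> a [ha [ha' l]].
have ea : pnode a = pnode y.
  apply: panc_pnode_eq => // p hp; move: l; rewrite /edge_gap hp.
  by have := panc_ph_le ha'; lra.
split=> hy; last by split => //; rewrite -ea; case: ha'.
apply: panc_edge => //; rewrite -ea; apply/esym/panc_same_pnode => //.
by rewrite ea (le_trans (hv_pnode_le y) hy).
Qed.
End Tree.

Section Levels.
Variables (R : realType) (T1 T2 : mtree R) (delta : R).
Local Notation levels := (levels T1 T2 delta).
Local Notation lvl := (lvl T1 T2 delta).

Lemma levels_sorted : sorted <%R levels.
Proof.
rewrite lt_sorted_uniq_le sort_uniq undup_uniq /=.
by apply: sort_sorted; apply: le_total.
Qed.

Lemma hv1_in_levels (v : node T1) : hv v \in levels.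
Proof. by rewrite mem_sort mem_undup mem_cat map_f ?mem_enum. Qed.

Lemma hv2_in_levels (v : node T2) : hv v - delta \in levels.
Proof.
rewrite mem_sort mem_undup mem_cat; apply/orP; right.
by apply: (map_f (fun v => hv v - delta)); rewrite mem_enum.
Qed.

Lemma lvl_lt i j : (i < j)%N -> (j < size levels)%N -> lvl i < lvl j.
Proof.
move=> hij hj; apply: (sorted_ltn_nth lt_trans) => //; first exact: levels_sorted.
by rewrite inE (ltn_trans hij hj).
Qed.

Lemma lvl_le i j : (i <= j)%N -> (j < size levels)%N -> lvl i <= lvl j.
Proof. by rewrite leq_eqVlt => /orP[/eqP -> //|h] hj; apply/ltW/lvl_lt. Qed.

Lemma lvl_inj i j : (i < size levels)%N -> (j < size levels)%N -> lvl i = lvl j -> i = j.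
Proof.
move=> hi hj e; case: (ltngtP i j) => // h.
  by have := lvl_lt h hj; rewrite e ltxx.
by have := lvl_lt h hi; rewrite e ltxx.
Qed.

Lemma lvl_index x : x \in levels -> x = lvl (index x levels).
Proof. by move=> hx; rewrite /lvl nth_index. Qed.

Lemma lvl0_le x : x \in levels -> lvl 0 <= x.
Proof. by move=> hx; rewrite (lvl_index hx) lvl_le ?index_mem. Qed.

Lemma no_level_between x k :
  x \in levels -> (k.+1 < size levels)%N -> lvl k < x -> x < lvl k.+1 -> False.
Proof.
move=> hx hk; rewrite (lvl_index hx); case: (leqP (index x levels) k) => h.
  by rewrite ltNge lvl_le // (ltn_trans _ hk).
by move=> _; rewrite ltNge lvl_le ?index_mem.
Qed.

Lemma hv_pnode1_le_lvl (u : pt T1) k :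
  (k.+1 < size levels)%N -> ph u < lvl k.+1 -> hv (pnode u) <= lvl k.
Proof.
move=> hk hu; rewrite leNgt; apply/negP => h.
exact: no_level_between (hv1_in_levels _) hk h (le_lt_trans (hv_pnode_le u) hu).
Qed.

Lemma hv_pnode2_le_lvl (y : pt T2) k :
  (k.+1 < size levels)%N -> ph y < lvl k.+1 + delta -> hv (pnode y) <= lvl k + delta.
Proof.
move=> hk hy; rewrite leNgt; apply/negP => h.
have := hv_pnode_le y; have := no_level_between (hv2_in_levels (pnode y)) hk.
by lra.
Qed.

Lemma lvl0_le_ph1 (u : pt T1) : lvl 0 <= ph u.
Proof. exact: le_trans (lvl0_le (hv1_in_levels _)) (hv_pnode_le u). Qed.

Lemma lvl0_le_ph2 (y : pt T2) : lvl 0 + delta <= ph y.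
Proof. by have := lvl0_le (hv2_in_levels (pnode y)); have := hv_pnode_le y; lra. Qed.

End Levels.

Lemma real_induction (R : realType) (a b : R) (P : R -> Prop) : a <= b -> P a ->
  (forall t, a < t <= b -> (forall s, a <= s < t -> P s) -> P t) ->
  (forall t, a <= t < b -> (forall s, a <= s <= t -> P s) ->
     exists2 e, 0 < e & forall s, t < s < t + e -> s <= b -> P s) ->
  P b.
Proof.
move=> hab Pa Pleft Pright.
pose E : set R := fun t => a <= t <= b /\ forall s, a <= s <= t -> P s.
have Ea : E a.
  split=> [|s /andP[l1 l2]]; first by rewrite lexx hab.
  by have -> : s = a by apply/eqP; rewrite eq_le l1 l2.
have supE : has_sup E by split; [exists a | exists b => t [/andP[]]].
have le_as : a <= sup E by apply: sup_upper_bound.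
have le_sb : sup E <= b by apply: ge_sup; [exists a | move=> t [/andP[]]].
have below r : a <= r < sup E -> P r.
  move=> /andP[l1 l2]; have [|t [_ Pt] lt] := @sup_adherent _ E (sup E - r) _ supE.
    by rewrite subr_gt0.
  by apply: Pt; rewrite l1 /=; move: lt; lra.
have Esup : E (sup E).
  split=> [|r /andP[l1]]; first by rewrite le_as le_sb.
  rewrite le_eqVlt => /orP[/eqP ->|l2]; last by apply: below; rewrite l1.
  move: le_as; rewrite le_eqVlt => /orP[/eqP <- //|l3].
  by apply: Pleft; rewrite ?l3.
case: (ltP (sup E) b) => [lt|ge]; last by apply: Esup.2; rewrite hab ge.
have [|e he Pe] := Pright (sup E) _ Esup.2; first by rewrite le_as lt.
pose t1 := if b <= sup E + e / 2 then b else sup E + e / 2.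
have Et1 : E t1.
  split=> [|r /andP[l1 l2]]; first by rewrite /t1; case: ifP; lra.
  case: (lerP r (sup E)) => l3; first by apply: Esup.2; rewrite l1.
  by apply: Pe; move: l2; rewrite /t1; case: ifP; lra.
by have := sup_upper_bound supE Et1; rewrite /t1; case: ifP; lra.
Qed.

Section ShiftMonotone.
Variables (R : realType) (T1 T2 : mtree R) (F : pt T1 -> Prop).
Variables (alpha : pt T1 -> pt T2) (d : R).
Hypothesis F_down : forall u v, F v -> panc v u -> F u.
Hypothesis alpha_cont : forall u, F u -> forall e, 0 < e -> exists eta, 0 < eta /\
  forall u', F u' -> tclose u u' eta -> tclose (alpha u) (alpha u') e.
Hypothesis alpha_ph : forall u, F u -> ph (alpha u) = ph u + d.

Lemma shift_near q : F q -> exists2 eta, 0 < eta & forall q', F q' -> tclose q q' eta ->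
  (ph q' <= ph q -> panc (alpha q) (alpha q')) /\ (ph q <= ph q' -> panc (alpha q') (alpha q)).
Proof.
move=> Fq; have [eta [he near]] := alpha_cont Fq (edge_gap_gt0 (alpha q)).
exists eta => // q' Fq' /(near _ Fq') /tclose_edge_gap[up down].
by rewrite (alpha_ph Fq) (alpha_ph Fq') in up down; split=> l; [apply: down|apply: up]; lra.
Qed.

Lemma shift_panc u v : F v -> panc v u -> panc (alpha v) (alpha u).
Proof.
move=> Fv hvu.
have Fq q : panc q u -> ph q <= ph v -> F q.
  by move=> hq l; apply: F_down Fv _; apply: panc_common hvu hq l.
pose P t := forall q, panc q u -> ph q = t -> panc (alpha q) (alpha u).
suff : P (ph v) by apply.
apply: real_induction (panc_ph_le hvu) _ _ _.
- by move=> q hq /(panc_ph_eq hq) ->; apply: panc_refl.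
- move=> t /andP[l1 l2] Pleft q hq eq.
  have Fq' : F q by apply: Fq hq _; rewrite eq.
  have [eta he near] := shift_near Fq'.
  have [s [ls1 ls2 ls3]] : exists s, [/\ ph u <= s, s < t & t - s < eta].
    by case: (lerP (t - eta / 2) (ph u)) => h; [exists (ph u) | exists (t - eta / 2)];
      split; lra.
  have [qs [hqs es]] := exists_panc_ph ls1.
  have hqqs : panc q qs by apply: panc_common hq hqs _; rewrite eq es ltW.
  apply: panc_trans ((near _ (F_down Fq' hqqs) _).1 _) (Pleft s _ _ hqs es).
  + by apply: tclose_anc hqqs _; rewrite eq es.
  + by rewrite eq es ltW.
  + by rewrite ls1 ls2.
- move=> t /andP[l1 l2] Pt.
  have [qt [hqt et]] := exists_panc_ph l1.
  have Fqt : F qt by apply: Fq hqt _; rewrite et ltW.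
  have [eta he near] := shift_near Fqt.
  exists eta => // s /andP[ls1 ls2] lsb q hq eq.
  have hqqt : panc q qt by apply: panc_common hq hqt _; rewrite eq et ltW.
  have Fq' : F q by apply: Fq hq _; rewrite eq.
  apply: panc_trans ((near _ Fq' _).2 _) (Pt t _ _ hqt et).
  + by apply/tclose_sym/tclose_anc; rewrite // eq et; lra.
  + by rewrite eq et ltW.
  + by rewrite l1 lexx.
Qed.
End ShiftMonotone.

Lemma exists_pos_le3 (R : realDomainType) (a b c : R) : 0 < a -> 0 < b -> 0 < c ->
  exists eta, [/\ 0 < eta, eta <= a, eta <= b & eta <= c].
Proof.
move=> ha hb hc; exists (Num.min a (Num.min b c)).
by rewrite !lt_min ha hb hc !ge_min !lexx !orbT.
Qed.

Lemma forest1_refl (R : realType) (T : mtree R) (S : pt T -> Prop) s : S s -> forest1 S s.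
Proof. by exists s; split=> //; apply: panc_refl. Qed.

Lemma forest1_down (R : realType) (T : mtree R) (S : pt T -> Prop) u v :
  forest1 S v -> panc v u -> forest1 S u.
Proof. by case=> s [hs h] h'; exists s; split=> //; apply: panc_trans h h'. Qed.

Definition lowest_image (R : realType) (T : mtree R) (Im : pt T -> Prop) (y zF : pt T) :=
  panc zF y /\ Im zF /\ (forall z', panc z' y -> Im z' -> panc z' zF).

Section Feasibility.
Variables (R : realType) (T1 T2 : mtree R) (delta : R).
Hypothesis delta_gt0 : 0 < delta.
Local Notation lvl := (lvl T1 T2 delta).
Local Notation valid := (@valid R T1 T2 delta).
Local Notation partial_good := (@partial_good R T1 T2 delta).

Lemma valid_pair_at k S w x :
  (k < size (levels T1 T2 delta))%N -> valid_pair delta S w -> S x -> ph x = lvl k -> valid k S w.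
Proof.
move=> hk [k' V] hx ex; suff <- : k' = k by [].
by case: (V) => hk' [_ [hS _]]; apply: (@lvl_inj _ T1 T2 delta) => //; rewrite -(hS x).
Qed.

Lemma valid0_feasible S w : valid 0 S w -> feasible delta 0 S w.
Proof.
case=> _ [_ [_ [hw _]]] y /panc_ph_le hy.
by have := lvl0_le_ph2 T1 delta y; rewrite hw in hy *; move: delta_gt0; lra.
Qed.

Lemma valid0_good S w : valid 0 S w -> partial_good S w (fun _ => w).
Proof.
case=> _ [[s0 hs0] [hS [hw hanc]]].
have S_forest u : forest1 S u -> S u.
  move=> [s [hs hsu]]; suff -> : u = s by [].
  apply/esym/(panc_ph_eq hsu)/eqP; rewrite eq_le (panc_ph_le hsu) andbT hS //.
  exact: lvl0_le_ph1.
split; first by move=> *; apply: panc_refl.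
split; first by move=> u _ e he; exists 1; split=> // *; apply: tclose_refl.
split; first by move=> u /S_forest /hS ->; rewrite hw.
split.
  move=> u1 u2 /S_forest h1 /S_forest h2 _ a1 a2 [ha1 e1] [ha2 e2].
  suff -> : a1 = a2 by apply: panc_refl.
  by rewrite (hS _ h1) in e1; rewrite (hS _ h2) in e2; apply: hanc h1 h2 ha1 _ ha2 _; lra.
move=> z hz []; suff -> : z = w by exists s0; split=> //; apply: forest1_refl.
apply/esym/(panc_ph_eq hz)/eqP; rewrite eq_le (panc_ph_le hz) andbT hw.
exact: lvl0_le_ph2.
Qed.

(* C(S) and C(w) of the paper, the level index [k] being 0-based *)
Definition child1 k (S : pt T1 -> Prop) x := ph x = lvl k /\ exists s, S s /\ panc s x.
Definition child2 k (w : pt T2) z := ph z = lvl k + delta /\ panc w z.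

Section Step.
Variables (k : nat) (S : pt T1 -> Prop) (w : pt T2).
Hypothesis S_valid : valid k.+1 S w.
Local Notation F := (forest1 S).

Lemma step_size : (k.+1 < size (levels T1 T2 delta))%N.
Proof. by case: S_valid. Qed.

Lemma S_ph s : S s -> ph s = lvl k.+1.
Proof. by case: S_valid => _ [_ [hS _]]; apply: hS. Qed.

Lemma w_ph : ph w = lvl k.+1 + delta.
Proof. by case: S_valid => _ [_ [_ []]]. Qed.

Lemma lvl_step : lvl k < lvl k.+1.
Proof. exact: lvl_lt step_size. Qed.

Lemma forest_ph_le u : F u -> ph u <= lvl k.+1.
Proof. by case=> s [/S_ph <- /panc_ph_le]. Qed.

Lemma forest_top u : F u -> lvl k.+1 <= ph u -> S u.
Proof.
case=> s [hs hsu] l; suff -> : u = s by [].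
by apply/esym/(panc_ph_eq hsu)/eqP; rewrite eq_le (panc_ph_le hsu) andbT S_ph.
Qed.

Lemma child1_anc u : F u -> ph u <= lvl k -> exists x, child1 k S x /\ panc x u.
Proof.
case=> s [hs hsu] l; have [x [hxu ex]] := exists_panc_ph l.
exists x; split=> //; split=> //; exists s; split=> //.
by apply: panc_common hsu hxu _; rewrite ex S_ph // ltW // lvl_step.
Qed.

Lemma child1_desc u : F u -> lvl k <= ph u -> ph u < lvl k.+1 ->
  exists x, child1 k S x /\ panc u x.
Proof.
case=> s [hs hsu] l1 l2.
have [x [hux ex]] := exists_desc_ph (hv_pnode1_le_lvl step_size l2) l1.
by exists x; split=> //; split=> //; exists s; split=> //; apply: panc_trans hsu hux.
Qed.

Lemma child2_anc y : panc w y -> ph y <= lvl k + delta -> exists z, child2 k w z /\ panc z y.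
Proof.
move=> hwy l; have [z [hzy ez]] := exists_panc_ph l.
exists z; split=> //; split=> //; apply: panc_common hwy hzy _.
by rewrite ez w_ph; have := lvl_step; lra.
Qed.

Lemma child2_desc y : panc w y -> lvl k + delta <= ph y -> ph y < lvl k.+1 + delta ->
  exists z, child2 k w z /\ panc y z.
Proof.
move=> hwy l1 l2.
have [z [hyz ez]] := exists_desc_ph (hv_pnode2_le_lvl step_size l2) l1.
by exists z; split=> //; split=> //; apply: panc_trans hwy hyz.
Qed.

Lemma child1_uniq u x1 x2 : ph u < lvl k.+1 ->
  pcomparable u x1 -> pcomparable u x2 -> child1 k S x1 -> child1 k S x2 -> x1 = x2.
Proof.
move=> l h1 h2 [e1 _] [e2 _]; apply: pcomparable_uniq h1 h2 _ _; rewrite e1 ?e2 //.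
exact: hv_pnode1_le_lvl step_size l.
Qed.

Lemma child2_uniq y z1 z2 : ph y < lvl k.+1 + delta ->
  pcomparable y z1 -> pcomparable y z2 -> child2 k w z1 -> child2 k w z2 -> z1 = z2.
Proof.
move=> l h1 h2 [e1 _] [e2 _]; apply: pcomparable_uniq h1 h2 _ _; rewrite e1 ?e2 //.
exact: hv_pnode2_le_lvl step_size l.
Qed.

Section Restrict.
Variable alpha : pt T1 -> pt T2.
Hypothesis alpha_good : partial_good S w alpha.

Lemma alpha_in u : F u -> panc w (alpha u).
Proof. by case: alpha_good => + _; apply. Qed.

Lemma alpha_ph u : F u -> ph (alpha u) = ph u + delta.
Proof. by case: alpha_good => _ [_ [+ _]]; apply. Qed.

Lemma alpha_panc u v : F v -> panc v u -> panc (alpha v) (alpha u).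
Proof.
by case: alpha_good => _ [cont _]; apply: (shift_panc (@forest1_down _ _ S) cont alpha_ph).
Qed.

Lemma child1_forest x : child1 k S x -> F x.
Proof. by case=> _ [s [hs hsx]]; exists s. Qed.

Lemma alpha_child x : child1 k S x -> child2 k w (alpha x).
Proof.
move=> hx; have Fx := child1_forest hx.
by split; [rewrite alpha_ph //; case: hx => -> | apply: alpha_in].
Qed.

Definition fiber z x := child1 k S x /\ alpha x = z.

Lemma fiber_forest z u : forest1 (fiber z) u -> F u.
Proof. by case=> x [[hx _] hxu]; apply: forest1_down (child1_forest hx) hxu. Qed.

Lemma fiber_preimage z u : child2 k w z -> F u -> panc z (alpha u) -> forest1 (fiber z) u.
Proof.
move=> [ez _] Fu hzu.
have [x [hx hxu]] : exists x, child1 k S x /\ panc x u.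
  by apply: child1_anc => //; move: (panc_ph_le hzu); rewrite alpha_ph // ez; lra.
exists x; split=> //; split=> //.
apply: panc_ph_inj (alpha_panc (child1_forest hx) hxu) hzu _.
by rewrite alpha_ph ?ez; [case: hx => -> | apply: child1_forest].
Qed.

Lemma fiber_valid z x0 : child2 k w z -> fiber z x0 -> valid k (fiber z) z.
Proof.
move=> hz hx0; split; first exact: ltn_trans (ltnSn k) step_size.
split; first by exists x0.
split; first by move=> x [[]].
split; first by case: hz.
move=> s1 s2 a1 a2 [hs1 e1] [hs2 e2] ha1 ea1 ha2 ea2.
case: alpha_good => _ [_ [_ [P2 _]]].
have Fs1 := child1_forest hs1; have Fs2 := child1_forest hs2.
have h1 : anc_at s1 a1 (2 * delta) by split=> //; rewrite ea1; case: hs1 => ->; lra.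
have h2 : anc_at s2 a2 (2 * delta) by split=> //; rewrite ea2; case: hs2 => ->; lra.
by apply: panc_antisym; [apply: P2 Fs1 Fs2 _ _ _ h1 h2 | apply: P2 Fs2 Fs1 _ _ _ h2 h1];
  rewrite e1 e2; apply: panc_refl.
Qed.

Lemma fiber_good z x0 : child2 k w z -> fiber z x0 -> partial_good (fiber z) z alpha.
Proof.
move=> hz hx0; case: alpha_good => _ [cont [_ [P2 P3]]].
split; first by move=> u [x [[hx <-] hxu]]; apply: alpha_panc (child1_forest hx) hxu.
split; first by move=> u /fiber_forest /cont h e /h[eta [he near]]; exists eta;
  split=> // u' /fiber_forest; apply: near.
split; first by move=> u /fiber_forest; apply: alpha_ph.
split; first by move=> u1 u2 /fiber_forest F1 /fiber_forest F2; apply: P2.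
move=> y hzy nIm.
have [|zF [[hzFy [[u [Fu ezF]] low]] bnd]] := P3 y (panc_trans hz.2 hzy).
  by case=> u [Fu eu]; apply: nIm; exists u; split=> //; apply: fiber_preimage; rewrite ?eu.
subst zF.
have hz_zF : panc z (alpha u).
  by apply: low hzy _; exists x0; case: hx0 => /child1_forest ? <-.
exists (alpha u); split=> //; split=> //; split.
  by exists u; split=> //; apply: fiber_preimage.
by move=> z' hz'y [u' [/fiber_forest Fu' ez']]; apply: low hz'y _; exists u'.
Qed.

Lemma empty_fiber_depth z : child2 k w z -> (forall x, ~ fiber z x) ->
  depth_le z (2 * delta - ((lvl k.+1 + delta) - (lvl k + delta))).
Proof.
move=> hz hempty y hzy.
have no_fiber u : F u -> ~ panc z (alpha u).
  by move=> Fu /(fiber_preimage hz Fu)[x [hx _]]; apply: hempty hx.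
case: alpha_good => _ [_ [_ [_ P3]]].
have [|zF [[hzFy [[u [Fu ezF]] _]] bnd]] := P3 y (panc_trans hz.2 hzy).
  by case=> u [Fu eu]; apply: no_fiber Fu _; rewrite eu.
subst zF.
have huz : panc (alpha u) z by case: (panc_total hzFy hzy) => // /no_fiber[].
have ph_u : ph u = lvl k.+1.
  apply/eqP; rewrite eq_le forest_ph_le //= leNgt; apply/negP => hlt.
  have [|x [hx hux]] := child1_desc Fu _ hlt.
    by move: (panc_ph_le huz); rewrite alpha_ph // hz.1; lra.
  apply: (hempty x); split=> //.
  apply: (child2_uniq _ (or_introl (alpha_panc Fu hux)) (or_introl huz) (alpha_child hx) hz).
  by rewrite alpha_ph // ltrD2r.
rewrite hz.1; move: bnd; rewrite alpha_ph // ph_u; have := ler_norm (lvl k.+1 + delta - ph y).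
lra.
Qed.

Lemma good_feasible :
  (forall S' w', valid k S' w' -> (exists a, partial_good S' w' a) -> feasible delta k S' w') ->
  feasible delta k.+1 S w.
Proof.
move=> IH; case: (classic (exists z, child2 k w z)) => [hC|hC]; [right | left].
  split=> //; exists fiber; split.
    by move=> x; split=> [hx|[z [_ []]] //]; exists (alpha x); split=> //; apply: alpha_child.
  split; first by move=> z z' _ _ hne x [_ e1] [_ e2]; apply: hne; rewrite -e1 -e2.
  move=> z hz; split=> [[x0 hx0]|]; last exact: empty_fiber_depth.
  split; first by exists k; apply: fiber_valid hx0.
  by apply: IH; [apply: fiber_valid hx0 | exists alpha; apply: fiber_good hx0].
split=> [z hz|x hx]; apply: hC; first by exists z.
by exists (alpha x); apply: alpha_child.
Qed.

End Restrict.

(* the data of the second alternative of [feasible] at level [k.+1] *)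
Section Glue.
Variable Sj : pt T2 -> pt T1 -> Prop.
Hypothesis Sj_cover : forall x, child1 k S x <-> exists z, child2 k w z /\ Sj z x.
Hypothesis Sj_disjoint : forall z z', child2 k w z -> child2 k w z' -> z <> z' ->
  forall x, Sj z x -> ~ Sj z' x.
Hypothesis Sj_valid : forall z, child2 k w z -> (exists x, Sj z x) -> valid_pair delta (Sj z) z.
Hypothesis Sj_empty : forall z, child2 k w z -> (forall x, ~ Sj z x) ->
  depth_le z (2 * delta - ((lvl k.+1 + delta) - (lvl k + delta))).
Variable A : pt T2 -> pt T1 -> pt T2.
Hypothesis A_good : forall z, child2 k w z -> (exists x, Sj z x) -> partial_good (Sj z) z (A z).

Lemma Sj_child1 z x : child2 k w z -> Sj z x -> child1 k S x.
Proof. by move=> hz hx; apply/Sj_cover; exists z. Qed.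

Lemma Sj_uniq z z' x : child2 k w z -> child2 k w z' -> Sj z x -> Sj z' x -> z = z'.
Proof. by move=> hz hz' hx hx'; apply: NNPP => /(Sj_disjoint hz hz')/(_ x hx). Qed.

Lemma Sj_valid_at z x : child2 k w z -> Sj z x -> valid k (Sj z) z.
Proof.
move=> hz hx; apply: (valid_pair_at _ _ hx (Sj_child1 hz hx).1).
  exact: ltn_trans (ltnSn k) step_size.
by apply: Sj_valid hz _; exists x.
Qed.

Lemma Sj_forest z u : child2 k w z -> forest1 (Sj z) u -> F u.
Proof. by move=> hz [x [/(Sj_child1 hz) hx hxu]]; apply: forest1_down (child1_forest hx) hxu. Qed.

Lemma A_in z x u : child2 k w z -> Sj z x -> forest1 (Sj z) u -> panc z (A z u).
Proof. by move=> hz hx; case: (A_good hz (ex_intro _ x hx)) => + _; apply. Qed.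

Lemma A_ph z x u : child2 k w z -> Sj z x -> forest1 (Sj z) u -> ph (A z u) = ph u + delta.
Proof. by move=> hz hx; case: (A_good hz (ex_intro _ x hx)) => _ [_ [+ _]]; apply. Qed.

Definition branch u x z := [/\ pcomparable u x, child2 k w z & Sj z x].

Lemma branch_exists u : F u -> ph u < lvl k.+1 -> exists x z, branch u x z.
Proof.
move=> Fu l; have [x [hx hux]] : exists x, child1 k S x /\ pcomparable u x.
  case: (lerP (ph u) (lvl k)) => l'.
    by have [x [hx hxu]] := child1_anc Fu l'; exists x; split=> //; right.
  by have [x [hx hux]] := child1_desc Fu (ltW l') l; exists x; split=> //; left.
by have [z [hz hxz]] := proj1 (Sj_cover x) hx; exists x, z.
Qed.

Lemma branch_uniq u x z x' z' :
  ph u < lvl k.+1 -> branch u x z -> branch u x' z' -> x = x' /\ z = z'.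
Proof.
move=> l [hux hz hxz] [hux' hz' hxz'].
have ex : x = x' by apply: child1_uniq l hux hux' (Sj_child1 hz hxz) (Sj_child1 hz' hxz').
by split=> //; apply: Sj_uniq hz hz' hxz _; rewrite ex.
Qed.

Lemma branch_common u u' a x z : F u' -> panc a u -> panc a u' -> ph a < lvl k.+1 ->
  branch u x z -> branch u' x z.
Proof.
move=> Fu' hau hau' l [hux hz hxz].
have [|x' [z' hb']] := branch_exists Fu'; first by apply: le_lt_trans (panc_ph_le hau') l.
suff [<- <-] : x' = x /\ z' = z by [].
case: hb' => hux' hz' hxz'; apply: branch_uniq l _ _.
  by split; [apply: panc_pcomparable hau' hux' | |].
by split; [apply: panc_pcomparable hau hux | |].
Qed.

Lemma branch_below u x z : branch u x z -> ph u <= lvl k -> panc x u.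
Proof.
case=> -[hux|//] hz hxz l; suff -> : u = x by apply: panc_refl.
apply: (panc_ph_eq hux); apply/eqP; rewrite eq_le (panc_ph_le hux) andbT.
by rewrite (Sj_child1 hz hxz).1.
Qed.

Lemma branch_above u x z : branch u x z -> lvl k <= ph u -> panc u x.
Proof.
case=> -[//|hxu] hz hxz l; suff -> : u = x by apply: panc_refl.
apply/esym/(panc_ph_eq hxu)/eqP; rewrite eq_le (panc_ph_le hxu) andbT.
by rewrite (Sj_child1 hz hxz).1.
Qed.

Lemma branch_forest u x z : branch u x z -> ph u <= lvl k -> forest1 (Sj z) u.
Proof. by move=> hb l; exists x; split; [case: hb | apply: branch_below hb l]. Qed.

Lemma Sj_forest_branch z u : child2 k w z -> forest1 (Sj z) u ->
  exists x, branch u x z /\ ph u <= lvl k.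
Proof.
move=> hz [x [hx hxu]]; exists x; split; first by split=> //; right.
by rewrite -(Sj_child1 hz hx).1 panc_ph_le.
Qed.

Definition glue_rel u y :=
  (lvl k.+1 <= ph u /\ y = w) \/
  (ph u < lvl k.+1 /\ exists x z, branch u x z /\
     (ph u <= lvl k -> y = A z u) /\ (lvl k < ph u -> panc y z /\ ph y = ph u + delta)).

Definition glue u := epsilon (inhabits w) (glue_rel u).

Lemma glue_spec u : F u -> glue_rel u (glue u).
Proof.
move=> Fu; apply: epsilon_spec.
case: (ltP (ph u) (lvl k.+1)) => [l|l]; last by exists w; left.
have [x [z hb]] := branch_exists Fu l.
case: (lerP (ph u) (lvl k)) => l'.
  exists (A z u); right; split=> //; exists x, z; split=> //; split=> // l''.
  by have := lt_le_trans l'' l'; rewrite ltxx.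
have [|y [hyz ey]] := @exists_panc_ph _ _ z (ph u + delta).
  by case: hb => _ [-> _] _; rewrite lerD2r ltW.
exists y; right; split=> //; exists x, z; split=> //; split=> // l''.
by have := le_lt_trans l'' l'; rewrite ltxx.
Qed.

Lemma glue_top u : F u -> lvl k.+1 <= ph u -> glue u = w.
Proof.
move=> Fu l; case: (glue_spec Fu) => [[_ //]|[l' _]].
by have := lt_le_trans l' l; rewrite ltxx.
Qed.

Lemma glue_low u x z : F u -> ph u <= lvl k -> branch u x z -> glue u = A z u.
Proof.
move=> Fu l hb; have lt := le_lt_trans l lvl_step.
case: (glue_spec Fu) => [[l' _]|[_ [x' [z' [hb' [low _]]]]]].
  by have := le_lt_trans l' lt; rewrite ltxx.
by have [_ <-] := branch_uniq lt hb' hb; apply: low.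
Qed.

Lemma glue_mid u x z : F u -> lvl k < ph u -> ph u < lvl k.+1 -> branch u x z ->
  panc (glue u) z /\ ph (glue u) = ph u + delta.
Proof.
move=> Fu l1 l2 hb; case: (glue_spec Fu) => [[l' _]|[_ [x' [z' [hb' [_ mid]]]]]].
  by have := le_lt_trans l' l2; rewrite ltxx.
by have [_ <-] := branch_uniq l2 hb' hb; apply: mid.
Qed.

Lemma glue_ph u : F u -> ph (glue u) = ph u + delta.
Proof.
move=> Fu; case: (ltP (ph u) (lvl k.+1)) => l; last first.
  by rewrite glue_top // w_ph; congr (_ + _); apply/eqP; rewrite eq_le l forest_ph_le.
have [x [z hb]] := branch_exists Fu l.
case: (lerP (ph u) (lvl k)) => l'; last by case: (glue_mid Fu l' l hb).
by case: (hb) => _ hz hxz; rewrite (glue_low Fu l' hb) (A_ph hz hxz (branch_forest hb l')).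
Qed.

Lemma glue_branch u x z : F u -> ph u < lvl k.+1 -> branch u x z -> pcomparable (glue u) z.
Proof.
move=> Fu l hb; case: (lerP (ph u) (lvl k)) => l'; last by left; case: (glue_mid Fu l' l hb).
case: (hb) => _ hz hxz; right; rewrite (glue_low Fu l' hb).
exact: A_in hz hxz (branch_forest hb l').
Qed.

Lemma glue_branch_eq u x z z' : F u -> ph u < lvl k.+1 -> branch u x z ->
  child2 k w z' -> pcomparable (glue u) z' -> z = z'.
Proof.
move=> Fu l hb hz' hgz'; case: (hb) => _ hz _.
by apply: (child2_uniq _ (glue_branch Fu l hb) hgz' hz hz'); rewrite glue_ph // ltrD2r.
Qed.

Lemma glue_in u : F u -> panc w (glue u).
Proof.
move=> Fu; case: (ltP (ph u) (lvl k.+1)) => l; last by rewrite glue_top //; apply: panc_refl.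
have [x [z hb]] := branch_exists Fu l; case: (hb) => _ [_ hwz] _.
case: (glue_branch Fu l hb) => [hgz|/(panc_trans hwz)//].
by apply: panc_common hwz hgz _; rewrite glue_ph // w_ph lerD2r ltW.
Qed.

Lemma glue_empty_child u z : F u -> child2 k w z -> (forall x, ~ Sj z x) ->
  pcomparable (glue u) z -> glue u = w.
Proof.
move=> Fu hz hempty hgz; case: (ltP (ph u) (lvl k.+1)) => l; last exact: glue_top.
have [x [z' hb]] := branch_exists Fu l.
have ez : z' = z := glue_branch_eq Fu l hb hz hgz.
by case: hb => _ _; rewrite ez => /hempty.
Qed.

Lemma glue_pcomparable u u' x z : F u -> F u' -> ph u < lvl k.+1 -> ph u' < lvl k.+1 ->
  branch u x z -> branch u' x z -> lvl k < ph u \/ lvl k < ph u' ->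
  pcomparable (glue u) (glue u').
Proof.
move=> Fu Fu' l l' hb hb' [lo|lo'].
  by apply: panc_pcomparable (glue_mid Fu lo l hb).1 (pcomparable_sym (glue_branch Fu' l' hb')).
apply: pcomparable_sym.
exact: panc_pcomparable (glue_mid Fu' lo' l' hb').1 (pcomparable_sym (glue_branch Fu l hb)).
Qed.

Lemma glue_cont_top u : F u -> lvl k.+1 <= ph u -> forall e, 0 < e ->
  forall u', F u' -> tclose u u' e -> tclose (glue u) (glue u') e.
Proof.
move=> Fu l e he u' Fu' /tcloseP[a [hau hau' _ la']].
rewrite glue_top //; apply: tclose_anc (glue_in Fu') _.
by rewrite glue_ph // w_ph; have := panc_ph_le hau; lra.
Qed.

Lemma glue_cont_branch u x z : F u -> ph u < lvl k.+1 -> branch u x z -> forall e, 0 < e ->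
  exists eta, 0 < eta /\ forall u', F u' -> tclose u u' eta -> tclose (glue u) (glue u') e.
Proof.
move=> Fu l hb e he.
have [e1 [he1 near_low]] : exists e1, 0 < e1 /\ forall u', F u' -> ph u <= lvl k ->
    ph u' <= lvl k -> branch u' x z -> tclose u u' e1 -> tclose (glue u) (glue u') e.
  case: (lerP (ph u) (lvl k)) => lu; last first.
    by exists 1; split=> // u' _ /(lt_le_trans lu); rewrite ltxx.
  case: (hb) => _ hz hxz; case: (A_good hz (ex_intro _ x hxz)) => _ [cont _].
  have [e1 [he1 near]] := cont u (branch_forest hb lu) e he.
  exists e1; split=> // u' Fu' _ lu' hb'.
  by rewrite (glue_low Fu lu hb) (glue_low Fu' lu' hb'); apply/near/(branch_forest hb' lu').
have [|eta [heta h1 h2 h3]] := exists_pos_le3 he1 he (_ : 0 < lvl k.+1 - ph u).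
  by rewrite subr_gt0.
exists eta; split=> // u' Fu' tc; have [a [hau hau' la la']] := tcloseP tc.
have lah : ph a < lvl k.+1 by lra.
have hb' := branch_common Fu' hau hau' lah hb.
have l' : ph u' < lvl k.+1 by apply: le_lt_trans (panc_ph_le hau') lah.
have comparable : lvl k < ph u \/ lvl k < ph u' -> tclose (glue u) (glue u') e.
  move=> lo; apply: pcomparable_tclose (glue_pcomparable Fu Fu' l l' hb hb' lo) _ _;
    rewrite !glue_ph //; have := panc_ph_le hau; have := panc_ph_le hau'; lra.
case: (lerP (ph u) (lvl k)) => lu; last by apply: comparable; left.
case: (lerP (ph u') (lvl k)) => lu'; last by apply: comparable; right.
exact: near_low Fu' lu lu' hb' (tclose_le tc h1).
Qed.

Lemma glue_cont u : F u -> forall e, 0 < e ->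
  exists eta, 0 < eta /\ forall u', F u' -> tclose u u' eta -> tclose (glue u) (glue u') e.
Proof.
move=> Fu e he; case: (ltP (ph u) (lvl k.+1)) => l.
  by have [x [z hb]] := branch_exists Fu l; apply: glue_cont_branch hb e he.
by exists e; split=> //; apply: glue_cont_top.
Qed.

Lemma S_anc_panc s a u b : S s -> panc a s -> ph a = lvl k.+1 + 2 * delta ->
  F u -> panc b u -> ph b <= ph a -> panc a b.
Proof.
move=> hs has ea [s' [hs' hsu]] hbu l.
have [|c [hcs' ec]] := @exists_panc_ph _ _ s' (lvl k.+1 + 2 * delta).
  by rewrite S_ph //; have := delta_gt0; lra.
have -> : a = c by case: S_valid => _ [_ [_ [_ anc]]]; apply: anc hs hs' has ea hcs' ec.
by apply: panc_common (panc_trans hcs' hsu) hbu _; rewrite ec -ea.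
Qed.

Lemma glue_P2 u1 u2 : F u1 -> F u2 -> panc (glue u1) (glue u2) ->
  forall a1 a2, anc_at u1 a1 (2 * delta) -> anc_at u2 a2 (2 * delta) -> panc a1 a2.
Proof.
move=> F1 F2 h a1 a2 [ha1 ea1] [ha2 ea2]; have hd := delta_gt0.
have le21 : ph u2 <= ph u1 by move: (panc_ph_le h); rewrite !glue_ph // lerD2r.
case: (ltP (ph u1) (lvl k.+1)) => l1; last first.
  apply: S_anc_panc (forest_top F1 l1) ha1 _ F2 ha2 _.
    by move: ea1; rewrite (_ : ph u1 = lvl k.+1); [lra | apply/eqP; rewrite eq_le l1 forest_ph_le].
  by lra.
have l2 := le_lt_trans le21 l1.
have [x1 [z hb1]] := branch_exists F1 l1; have [x2 [z2 hb2]] := branch_exists F2 l2.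
have ez : z = z2.
  case: (hb2) => _ hz2 _; apply: glue_branch_eq F1 l1 hb1 hz2 _.
  exact: panc_pcomparable h (glue_branch F2 l2 hb2).
case: hb2 (hb2) => _ hz2 hx2z2 hb2; rewrite -ez in hz2 hx2z2 hb2.
case: (hb1) => _ hz hx1z.
have hz_valid := Sj_valid_at hz hx1z.
have [|c [hcx1 ec]] := @exists_panc_ph _ _ x1 (lvl k + 2 * delta).
  by rewrite (Sj_child1 hz hx1z).1; lra.
have hcx2 : panc c x2.
  have [|c2 [hcx2 ec2]] := @exists_panc_ph _ _ x2 (lvl k + 2 * delta).
    by rewrite (Sj_child1 hz hx2z2).1; lra.
  by case: hz_valid => _ [_ [_ [_ anc]]]; rewrite (anc x1 x2 c c2).
case: (lerP (ph u1) (lvl k)) => lo1.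
  have lo2 := le_trans le21 lo1.
  case: (A_good hz (ex_intro _ x1 hx1z)) => _ [_ [_ [P2 _]]].
  apply: (P2 _ _ (branch_forest hb1 lo1) (branch_forest hb2 lo2) _ a1 a2
    (conj ha1 ea1) (conj ha2 ea2)).
  by rewrite -(glue_low F1 lo1 hb1) -(glue_low F2 lo2 hb2).
have hca1 : panc a1 c.
  by apply: panc_common (panc_trans ha1 (branch_above hb1 (ltW lo1))) hcx1 _; rewrite ec; lra.
apply: panc_pcomparable_ph hca1 _ _; last by lra.
case: (lerP (ph u2) (lvl k)) => lo2.
  by apply: panc_total ha2 (panc_trans hcx2 (branch_below hb2 lo2)).
by left; apply: panc_common (panc_trans ha2 (branch_above hb2 (ltW lo2))) hcx2 _; rewrite ec; lra.
Qed.

Lemma glue_forest z u : child2 k w z -> forest1 (Sj z) u -> glue u = A z u.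
Proof.
move=> hz Fu; have [x [hb l]] := Sj_forest_branch hz Fu.
exact: glue_low (Sj_forest hz Fu) l hb.
Qed.

Definition glue_image y := exists u, F u /\ glue u = y.

Lemma glue_image_w : glue_image w.
Proof.
case: S_valid => _ [[s hs] _]; have Fs := forest1_refl hs.
by exists s; split=> //; apply: glue_top; rewrite // S_ph.
Qed.

Lemma glue_P3_empty y z : panc w y -> child2 k w z -> (forall x, ~ Sj z x) ->
  pcomparable y z -> `|ph w - ph y| <= 2 * delta ->
  exists zF, lowest_image glue_image y zF /\ `|ph zF - ph y| <= 2 * delta.
Proof.
move=> hwy hz hempty hyz bnd; exists w; split=> //; split=> //; split; first exact: glue_image_w.
move=> z' hz'y [u [Fu eu]]; subst z'.
by rewrite (glue_empty_child Fu hz hempty (panc_pcomparable hz'y hyz)); apply: panc_refl.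
Qed.

Lemma glue_P3_low y z x : child2 k w z -> Sj z x -> panc z y -> ~ glue_image y ->
  exists zF, lowest_image glue_image y zF /\ `|ph zF - ph y| <= 2 * delta.
Proof.
move=> hz hx hzy nIm.
case: (A_good hz (ex_intro _ x hx)) => _ [_ [_ [_ P3]]].
have [|zF [[hzFy [[u [Fu ezF]] lowA]] bnd]] := P3 y hzy.
  case=> u [Fu eu]; apply: nIm; exists u; split; first exact: Sj_forest hz Fu.
  by rewrite (glue_forest hz Fu).
have hz_zF : panc z zF by rewrite -ezF; apply: A_in hz hx Fu.
exists zF; split=> //; split=> //; split.
  by exists u; split; [apply: Sj_forest hz Fu | rewrite (glue_forest hz Fu)].
move=> z' hz'y [u' [Fu' eu']]; subst z'.
case: (ltP (ph u') (lvl k.+1)) => l; last by rewrite glue_top //; apply: panc_trans hz.2 hz_zF.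
have [x' [z'' hb]] := branch_exists Fu' l.
have ez := glue_branch_eq Fu' l hb hz (panc_pcomparable hz'y (or_intror hzy)).
rewrite ez in hb; case: (lerP (ph u') (lvl k)) => lo.
  apply: lowA hz'y _; exists u'.
  by split; [apply: branch_forest hb lo | rewrite (glue_low Fu' lo hb)].
exact: panc_trans (glue_mid Fu' lo l hb).1 hz_zF.
Qed.

Lemma glue_image_high y z x : panc y z -> child2 k w z -> Sj z x ->
  lvl k + delta < ph y -> ph y < lvl k.+1 + delta -> glue_image y.
Proof.
move=> hyz hz hx l1 l2; have [ex [s [hs hsx]]] := Sj_child1 hz hx.
have [|u [hux eu]] := @exists_panc_ph _ _ x (ph y - delta); first by rewrite ex; lra.
have Fu : F u.
  by exists s; split=> //; apply: panc_common hsx hux _; rewrite eu S_ph //; lra.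
have lu1 : lvl k < ph u by rewrite eu; lra.
have lu2 : ph u < lvl k.+1 by rewrite eu; lra.
have [hgz egz] := glue_mid Fu lu1 lu2 (And3 (or_introl hux) hz hx).
by exists u; split=> //; apply: panc_ph_inj hgz hyz _; rewrite egz eu; lra.
Qed.

Lemma glue_P3 y : panc w y -> ~ glue_image y ->
  exists zF, lowest_image glue_image y zF /\ `|ph zF - ph y| <= 2 * delta.
Proof.
move=> hwy nIm; have hy := panc_ph_le hwy; rewrite w_ph in hy.
have lhi : ph y < lvl k.+1 + delta.
  rewrite lt_neqAle hy andbT; apply/negP => /eqP ey; apply: nIm.
  by rewrite -(panc_ph_eq hwy); [apply: glue_image_w | rewrite w_ph].
have bnd_w : 0 <= ph w - ph y by rewrite w_ph subr_ge0.
case: (lerP (ph y) (lvl k + delta)) => llo.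
  have [z [hz hzy]] := child2_anc hwy llo.
  case: (classic (exists x, Sj z x)) => [[x hx]|hempty]; first exact: glue_P3_low hx hzy nIm.
  apply: (glue_P3_empty hwy hz _ (or_intror hzy)) => [x hx|]; first by apply: hempty; exists x.
  have := Sj_empty hz (fun x hx => hempty (ex_intro _ x hx)) hzy.
  by rewrite ger0_norm // w_ph hz.1; lra.
have [z [hz hyz]] := child2_desc hwy (ltW llo) lhi.
case: (classic (exists x, Sj z x)) => [[x hx]|hempty].
  by case: nIm; apply: glue_image_high hyz hz hx llo lhi.
apply: (glue_P3_empty hwy hz _ (or_introl hyz)) => [x hx|]; first by apply: hempty; exists x.
have := Sj_empty hz (fun x hx => hempty (ex_intro _ x hx)) (panc_refl z).
by rewrite ger0_norm // w_ph hz.1; have := delta_gt0; lra.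
Qed.

Lemma glue_good : partial_good S w glue.
Proof.
split; first exact: glue_in.
split; first exact: glue_cont.
split; first exact: glue_ph.
split; [exact: glue_P2 | exact: glue_P3].
Qed.

End Glue.

Lemma feasible_good :
  (forall S' w', valid k S' w' -> feasible delta k S' w' -> exists a, partial_good S' w' a) ->
  feasible delta k.+1 S w -> exists alpha, partial_good S w alpha.
Proof.
move=> IH; case=> [[no_child2 no_child1]|[_ [Sj [cover [disjoint child]]]]].
  (* no children: glue the empty family *)
  exists (glue (fun _ _ => False) (fun _ _ => w)).
  apply: glue_good => [x|z z' /no_child2[]|z /no_child2[]|z /no_child2[]|z /no_child2[]].
  by split=> [/no_child1[]|[z [/no_child2[]]]].
pose A z := epsilon (inhabits (fun _ => w)) (partial_good (Sj z) z).
exists (glue Sj A); apply: glue_good => // z hz; first by case/(child z hz).1.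
  exact: (child z hz).2.
move=> [x hx]; apply: epsilon_spec; have [hvp hf] := (child z hz).1 (ex_intro _ x hx).
apply: IH hf; apply: (valid_pair_at _ hvp hx); first exact: ltn_trans (ltnSn k) step_size.
exact: (proj2 (cover x) (ex_intro _ z (conj hz hx))).1.
Qed.
End Step.
End Feasibility.

Theorem lemma1 (R : realType) (T1 T2 : mtree R) (delta : R) (hdelta : 0 < delta)
  (k : nat) (S : pt T1 -> Prop) (w : pt T2) :
  valid delta k S w ->
  (feasible delta k S w <->
   exists alpha : pt T1 -> pt T2, partial_good delta S w alpha).
Proof.
elim: k S w => [|k IH] S w hv.
  by split=> _; [exists (fun _ => w); apply: valid0_good | apply: valid0_feasible].
split; first by apply: (feasible_good hdelta hv) => S' w' /IH[].
by case=> alpha ha; apply: (good_feasible hv ha) => S' w' /IH[].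
Qed.
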